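(* Let $F(\Sigma)$ be a free group with $\Sigma=A\sqcup B$, and let $b\in\langle B\rangle$ and $z\in F(\Sigma)$ be freely reduced words. Suppose that $z$ begins and ends with letters in $A\sqcup A^{-1}$, that $zb$ is not a proper power, and that there are $i\in\mathbb{Z}$ and $g,h\in F(\Sigma)$ such that $(zb)^i=gzh$ with the word $g\cdot z\cdot h$ freely reduced. Then $i\geq 1$ and $g\in\langle zb\rangle$.
   Context: $F(\Sigma)$ is the free group on $\Sigma$. An element $w$ is a proper power if $w=u^n$ for some $u$ and $n\geq 2$. *)

(* Free group F(Sigma) on Sigma = A ⊔ B, modelled as
   freely reduced words over letters Sigma × {+1,-1}. *)
From mathcomp Require Import all_boot all_order all_algebra.
Set Implicit Arguments. Unset Strict Implicit. Unset Printing Implicit Defensive.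

Section FreeGroup.
Variables A B : eqType.

Definition Sigma : eqType := (A + B)%type.
(* a letter: a generator together with a sign (true = inverse) *)
Definition letter : eqType := (Sigma * bool)%type.
Definition word := seq letter.

Definition inv_letter (x : letter) : letter := (x.1, ~~ x.2).

Fixpoint reduced (w : word) : bool :=
  match w with
  | x :: ((y :: _) as w') => (y != inv_letter x) && reduced w'
  | _ => true
  end.

Definition cons_red (x : letter) (w : word) : word :=
  match w with
  | y :: w' => if y == inv_letter x then w' else x :: w
  | [::] => [:: x]
  end.
Definition reduce (w : word) : word := foldr cons_red [::] w.

Definition fmul (u v : word) : word := reduce (u ++ v).
Definition finv (u : word) : word := rev (map inv_letter u).
Definition fone : word := [::].

Definition fpow (u : word) (i : int) : word :=
  match i with
  | Posz n => iter n (fmul u) fone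
  | Negz n => iter n.+1 (fmul (finv u)) fone
  end.

Definition isA (x : letter) : bool := if x.1 is inl _ then true else false.
Definition isB (x : letter) : bool := if x.1 is inr _ then true else false.

Definition in_gen_B (w : word) : Prop :=
  exists u : word, all isB u /\ reduce u = w.

Definition in_cyclic (u w : word) : Prop := exists j : int, w = fpow u j.

Definition proper_power (w : word) : Prop :=
  exists (u : word) (n : nat), reduced u /\ (2 <= n)%N /\ w = fpow u (Posz n).

Definition begins_in_A (w : word) : bool := if w is x :: _ then isA x else false.
Definition ends_in_A (w : word) : bool := if rev w is x :: _ then isA x else false.

End FreeGroup.

(* Write w = z b, a reduced word since z ends with an A-letter and b consists
   of B-letters; the A-letters of w are those of z, which begins and ends with
   one.
   If w is cyclically reduced, w^i is w...w for i > 0, so g z h = w^i puts a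
   copy of z at offset K = |g| mod |w| of the cyclic word w.  If K = 0, g is a
   power of w.  Otherwise +K maps the window z onto a copy of itself, so the
   set of A-positions is closed under +K; it contains 0, hence every multiple
   of d = gcd(|w|, K), so the B-gap is shorter than d and meets each orbit of
   +K at most once.  Going around an orbit shows that w is +K-invariant, hence
   d-periodic: a proper power.  For i < 0, w^i is w^-1...w^-1; reading z_0
   there as the inverse of an A-letter w_D shows that the prefix of w of
   length D+1 is its own inverse, impossible for a nonempty reduced word.
   If w is not cyclically reduced, then b = 1 and z = u y u^-1 with u nonempty
   and y cyclically reduced; comparing letters of z^i = u y^i u^-1 with g z h
   forces g = 1 and i = 1. *)

From Pilot Require Import Defs.
From mathcomp Require Import all_boot all_order all_algebra zify.
Set Implicit Arguments. Unset Strict Implicit. Unset Printing Implicit Defensive.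

Section Catn.
Variable T : Type.
Implicit Types s t r : seq T.

Definition catn n s : seq T := flatten (nseq n s).

Lemma catnS n s : catn n.+1 s = s ++ catn n s.
Proof. by []. Qed.

Lemma catnD m n s : catn (m + n) s = catn m s ++ catn n s.
Proof. by rewrite /catn nseqD flatten_cat. Qed.

Lemma size_catn n s : size (catn n s) = n * size s.
Proof. by elim: n => //= n IHn; rewrite catnS size_cat IHn mulSn. Qed.

Lemma nth_catn x0 n s i :
  i < n * size s -> nth x0 (catn n s) i = nth x0 s (i %% size s).
Proof.
elim: n i => [|n IHn] i; first by rewrite mul0n.
rewrite catnS nth_cat mulSn => lt_i; case: ltnP => [lt_is|le_si].
  by rewrite modn_small.
by rewrite IHn -?(modnDr (i - size s)) ?subnK //; lia.
Qed.

Lemma take_catn m n s : m <= n -> take (m * size s) (catn n s) = catn m s.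
Proof.
by move=> le_mn; rewrite -(subnKC le_mn) catnD take_size_cat ?size_catn.
Qed.

Lemma nth_mid_cat x0 s t r i :
  i < size t -> nth x0 (s ++ t ++ r) (size s + i) = nth x0 t i.
Proof. by move=> lt_it; rewrite nth_cat ltnNge leq_addr addKn nth_cat lt_it. Qed.

End Catn.

Lemma eq_modn_close m n d : m = n %[mod d] -> m < n + d -> n < m + d -> m = n.
Proof.
wlog le_mn : m n / m <= n.
  move=> hw eq_mn lt_m lt_n; case: (leqP m n) => [le_mn | /ltnW le_nm].
    exact: hw.
  exact/esym/hw.
move=> eq_mn _ lt_n; apply/eqP; rewrite eqn_leq le_mn -subn_eq0 /=.
have : d %| n - m by rewrite -eqn_mod_dvd // eq_mn.
by apply: contraLR; rewrite -lt0n => gt0; rewrite gtnNdvd // ltn_subLR.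
Qed.

Lemma orbit_shift_invariant (T : Type) (f : nat -> T) (bad : pred nat) K N :
  0 < N -> (forall t, f (t + N * K) = f t) ->
  (forall t, ~~ bad t -> f (t + K) = f t) ->
  (forall t j, bad t -> 0 < j < N -> ~~ bad (t + j * K)) ->
  forall t, f (t + K) = f t.
Proof.
move=> N_gt0 fNK good once t; case: (boolP (bad t)) => [bad_t|]; last exact: good.
have chain j : 0 < j <= N -> f (t + j * K) = f (t + K).
  elim: j => [//|[|j] IHj] /andP [_ le_jN]; first by rewrite mul1n.
  by rewrite mulSnr addnA good ?IHj ?once //; apply: ltnW.
by rewrite -(chain N) ?fNK // N_gt0 leqnn.
Qed.

(* f is read as a cyclic word of length p, the window [0, L) as its prefix z
   and the marked letters as the A-letters. *)
Section WindowShift.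
Variables (T : Type) (marked : pred T) (f : nat -> T) (p L K : nat).
Hypothesis f_mod : forall t, f (t %% p) = f t.
Hypothesis K_gt0 : 0 < K.
Hypothesis K_lt_p : K < p.
Hypothesis marked0 : marked (f 0).
Hypothesis marked_window : forall t, marked (f t) -> t %% p < L.
Hypothesis shift_window : forall j, j < L -> f (j + K) = f j.

Local Notation d := (gcdn p K).

Let p_gt0 : 0 < p. Proof. exact: leq_ltn_trans K_lt_p. Qed.
Let d_gt0 : 0 < d. Proof. by rewrite gcdn_gt0 p_gt0. Qed.

Let f_addMp t c : f (t + c * p) = f t.
Proof. by rewrite -f_mod addnC modnMDl f_mod. Qed.

Lemma shift_window_mod t : t %% p < L -> f (t + K) = f t.
Proof. by move=> win_t; rewrite -f_mod -modnDml f_mod shift_window // f_mod. Qed.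

Lemma marked_mulK a : marked (f (a * K)).
Proof.
elim: a => [|a IHa]; first by rewrite mul0n.
by rewrite mulSnr shift_window_mod // marked_window.
Qed.

Lemma gap_lt_gcd : p - L < d.
Proof.
have [a _ /dvdnP [c def_c]] := Bezoutl K p_gt0.
have d_le_K : d <= K by apply: dvdn_leq; rewrite ?dvdn_gcdr.
case: c def_c => [|c] def_c; first by have := d_gt0; lia.
(* a * K = -d mod p, so position p - d is marked and lies in the window. *)
have := marked_window (marked_mulK a); rewrite mulSn in def_c.
by rewrite (_ : a * K = c * p + (p - d)) ?modnMDl ?modn_small; lia.
Qed.

Lemma gap_visited_once t j :
  L <= t %% p -> 0 < j < p %/ d -> (t + j * K) %% p < L.
Proof.
move=> gap_t /andP [j_gt0 lt_j]; rewrite ltnNge; apply/negP => gap_tj.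
have dvd_dK : d %| j * K by rewrite dvdn_mull ?dvdn_gcdr.
(* Two gap positions congruent mod d coincide, the gap being shorter than d. *)
have same_mod_d : (t + j * K) %% p = t %% p %[mod d].
  by rewrite !modn_dvdm ?dvdn_gcdl // -modnDmr (eqP dvd_dK) addn0.
have /eqP : (t + j * K) %% p = t %% p.
  have lt1 := ltn_pmod t p_gt0; have lt2 := ltn_pmod (t + j * K) p_gt0.
  by have gap := gap_lt_gcd; apply: eq_modn_close same_mod_d _ _; lia.
rewrite eqn_mod_dvd ?leq_addr // addKn => dvd_pjK.
have : p <= j * d.
  by apply: dvdn_leq; rewrite ?muln_gt0 ?j_gt0 // muln_gcdr dvdn_gcd dvdn_mull.
by rewrite -{1}(divnK (dvdn_gcdl p K)) leq_pmul2r // leqNgt lt_j.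
Qed.

Lemma shift_invariant t : f (t + K) = f t.
Proof.
have dvd_dp := dvdn_gcdl p K; have dvd_dK := dvdn_gcdr p K.
apply: (orbit_shift_invariant (N := p %/ d) (bad := fun t => L <= t %% p)) => {t}.
- by rewrite divn_gt0 // dvdn_leq.
- by move=> t; rewrite -{2}(divnK dvd_dK) mulnCA divnK // mulnC f_addMp.
- by move=> t; rewrite -ltnNge; apply: shift_window_mod.
- by move=> t j gap_t lt_j; rewrite -ltnNge gap_visited_once.
Qed.

Lemma gcd_period t : f (t + d) = f t.
Proof.
have [a _ /dvdnP [c def_c]] := Bezoutl K p_gt0.
have f_addMK s b : f (s + b * K) = f s.
  by elim: b => [|b IHb]; rewrite ?addn0 // mulSnr addnA shift_invariant.
by rewrite -(f_addMK _ a) -addnA def_c f_addMp.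
Qed.

End WindowShift.

Section ReducedWords.
Variables A B : eqType.
Local Notation letter := (letter A B).
Local Notation word := (word A B).
Local Notation inv := (@inv_letter A B).
Local Notation finv := (@Defs.finv A B).
Local Notation cons_red := (@cons_red A B).
Local Notation isA := (@isA A B).
Local Notation isB := (@isB A B).
Local Notation adj := (fun x y : letter => y != inv x).
Implicit Types (x : letter) (s t u v w z b g h : word).

Lemma inv_letterK : involutive inv.
Proof. by case=> a e; rewrite /inv_letter negbK. Qed.

Lemma inv_letter_neq x : inv x != x.
Proof. by case: x => a []; rewrite /inv_letter xpair_eqE eqxx. Qed.

Lemma isA_inv x : isA (inv x) = isA x.
Proof. by []. Qed.

Lemma isB_isA x : isB x = ~~ isA x.
Proof. by case: x => [[]]. Qed.

Lemma neq_inv_letter x (y : letter) : isA x != isA y -> y != inv x.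
Proof. by apply: contraNneq => ->; rewrite isA_inv. Qed.

Lemma reducedE s : reduced s = sorted adj s.
Proof.
elim: s => [|x [|y s] IHs] //.
by rewrite -[LHS]/((y != inv x) && reduced (y :: s)) IHs.
Qed.

Lemma reduced_catl s t : reduced (s ++ t) -> reduced s.
Proof. by rewrite !reducedE => /cat_sorted2 []. Qed.

Lemma reduced_catr s t : reduced (s ++ t) -> reduced t.
Proof. by rewrite !reducedE => /cat_sorted2 []. Qed.

Lemma reduced_overlap s v t :
  v != [::] -> reduced (s ++ v) -> reduced (v ++ t) -> reduced (s ++ v ++ t).
Proof.
by case: v => // x v _; rewrite !reducedE /= !sorted_cat_cons => /andP [-> _].
Qed.

Lemma reduced_rcons_cons s t x (y : letter) :
  reduced (rcons s x) -> reduced (y :: t) -> y != inv x ->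
  reduced (rcons s x ++ y :: t).
Proof.
move=> rsx ryt yx; rewrite cat_rcons -cat1s.
by apply: reduced_overlap; rewrite ?cats1 //= yx.
Qed.

Lemma nth_reduced x0 s i :
  reduced s -> i.+1 < size s -> nth x0 s i.+1 != inv (nth x0 s i).
Proof. by rewrite reducedE => /(sortedP x0); apply. Qed.

Lemma size_finv s : size (finv s) = size s.
Proof. by rewrite size_rev size_map. Qed.

Lemma finv_cat s t : finv (s ++ t) = finv t ++ finv s.
Proof. by rewrite /finv map_cat rev_cat. Qed.

Lemma finv_cons x s : finv (x :: s) = rcons (finv s) (inv x).
Proof. by rewrite /Defs.finv /= rev_cons. Qed.

Lemma finv_rcons s x : finv (rcons s x) = inv x :: finv s.
Proof. by rewrite /finv map_rcons rev_rcons. Qed.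

Lemma finvK : involutive finv.
Proof. by move=> s; rewrite /finv map_rev revK (mapK inv_letterK). Qed.

Lemma nth_finv x0 s i :
  i < size s -> nth x0 (finv s) i = inv (nth x0 s (size s - i.+1)).
Proof.
by move=> lt_is; rewrite nth_rev size_map // (nth_map x0) //; lia.
Qed.

Lemma reduced_finv s : reduced (finv s) = reduced s.
Proof.
rewrite !reducedE rev_sorted sorted_map.
by apply: eq_sorted => x y /=; rewrite inv_letterK eq_sym.
Qed.

Lemma finv_neq s : reduced s -> s != [::] -> finv s != s.
Proof.
move=> rs ns; apply/eqP => s_selfinv.
have x0 : letter by case: s ns {rs s_selfinv}.
have s_gt0 : 0 < size s by rewrite lt0n size_eq0.
set D := (size s).-1.
have mirror j : j <= D -> nth x0 s j = inv (nth x0 s (D - j)).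
  by move=> le_jD; rewrite -{1}s_selfinv nth_finv; [congr (inv (nth _ _ _)) |]; lia.
have [r [D_even|D_odd]] : exists r, D = r + r \/ D = (r + r).+1.
  by exists (D %/ 2); lia.
- have := mirror r; rewrite D_even addnK leq_addr => /(_ isT) /esym/eqP.
  by rewrite (negbTE (inv_letter_neq _)).
- have lt_r : r.+1 < size s by lia.
  have := nth_reduced x0 rs lt_r; rewrite mirror; last by lia.
  by rewrite (_ : D - r.+1 = r) ?eqxx //; lia.
Qed.

Lemma foldr_cons_red s t : reduced (s ++ t) -> foldr cons_red t s = s ++ t.
Proof.
elim: s => [//|x s IHs] rxst /=; rewrite IHs; last exact: (reduced_catr (s := [:: x])).
move: rxst; rewrite cat_cons /Defs.cons_red; case: (s ++ t) => [//|y r].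
by rewrite -[reduced _]/((y != inv x) && reduced (y :: r)) => /andP [/negbTE ->].
Qed.

Lemma reduce_id s : reduced s -> reduce s = s.
Proof. by move=> rs; rewrite /reduce foldr_cons_red ?cats0. Qed.

Lemma foldr_cons_red_finv s t : foldr cons_red (s ++ t) (finv s) = t.
Proof.
elim: s t => [//|x s IHs] t.
by rewrite finv_cons foldr_rcons /= /Defs.cons_red inv_letterK eqxx IHs.
Qed.

Lemma fmul_cancel s v t :
  reduced (v ++ t) -> reduced (s ++ t) -> fmul (s ++ finv v) (v ++ t) = s ++ t.
Proof.
move=> rvt rst; rewrite /fmul /reduce -catA !foldr_cat.
rewrite -[foldr _ [::] t]/(reduce t) (reduce_id (reduced_catr rvt)).
by rewrite (foldr_cons_red rvt) foldr_cons_red_finv (foldr_cons_red rst).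
Qed.

Lemma all_reduce (P : pred letter) u :
  (forall x, P (inv x) = P x) -> all P u -> all P (reduce u).
Proof.
move=> P_inv; elim: u => [//|x u IHu] /andP [Px /IHu].
rewrite /reduce /= /Defs.cons_red; case: (foldr _ _ u) => [|y v] /=; first by rewrite Px.
by case/andP=> Py Pv; case: ifP => _ /=; rewrite ?Px ?Py ?Pv.
Qed.

Lemma in_gen_B_all_isB b : in_gen_B b -> all isB b.
Proof. by case=> u [Bu <-]; apply: all_reduce. Qed.

Section ConjugatePowers.
Variables u y : word.
Hypothesis y_neq0 : y != [::].
Hypothesis r_uyu : reduced (u ++ y ++ finv u).
Hypothesis r_yy : reduced (y ++ y).

Lemma reduced_conj_catn n : reduced (u ++ catn n.+1 y ++ finv u).
Proof.
have r_tail m : reduced (catn m.+1 y ++ finv u).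
  elim: m => [|m IHm]; first by rewrite /catn /= cats0 (reduced_catr r_uyu).
  by rewrite 2!catnS -!catA; apply: reduced_overlap; rewrite // catA -catnS.
rewrite catnS -catA; apply: reduced_overlap => //; last by rewrite catA -catnS.
by apply: (@reduced_catl _ (finv u)); rewrite -catA.
Qed.

Lemma fpow_conj_pos n : fpow (u ++ y ++ finv u) (Posz n.+1) = u ++ catn n.+1 y ++ finv u.
Proof.
elim: n => [|n IHn]; first by rewrite /= /fmul cats0 reduce_id // /catn /= cats0.
rewrite -[LHS]/(fmul (u ++ y ++ finv u) (fpow _ (Posz n.+1))) IHn (catA u y).
rewrite fmul_cancel ?reduced_conj_catn //; rewrite -catA (catA y) -catnS //.
exact: reduced_conj_catn.
Qed.

End ConjugatePowers.

Lemma fpow_conj_neg u y n :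
  y != [::] -> reduced (u ++ y ++ finv u) -> reduced (y ++ y) ->
  fpow (u ++ y ++ finv u) (Negz n) = u ++ catn n.+1 (finv y) ++ finv u.
Proof.
move=> y_neq0 r_uyu r_yy.
have finv_z : finv (u ++ y ++ finv u) = u ++ finv y ++ finv u.
  by rewrite !finv_cat finvK catA.
rewrite -[LHS]/(fpow (finv (u ++ y ++ finv u)) (Posz n.+1)) finv_z fpow_conj_pos //.
- by rewrite -size_eq0 size_finv size_eq0.
- by rewrite -finv_z reduced_finv.
- by rewrite -finv_cat reduced_finv.
Qed.

Lemma fpow_cyclic_pos w n :
  w != [::] -> reduced (w ++ w) -> fpow w (Posz n) = catn n w.
Proof.
case: n => [//|n] w_neq0 r_ww.
have r_w : reduced ([::] ++ w ++ finv [::]) by rewrite cats0 (reduced_catl r_ww).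
by have := fpow_conj_pos w_neq0 r_w r_ww n; rewrite cat0s [finv _]/= !cats0.
Qed.

Lemma fpow_cyclic_neg w n :
  w != [::] -> reduced (w ++ w) -> fpow w (Negz n) = catn n.+1 (finv w).
Proof.
move=> w_neq0 r_ww.
have r_w : reduced ([::] ++ w ++ finv [::]) by rewrite cats0 (reduced_catl r_ww).
by have := fpow_conj_neg n w_neq0 r_w r_ww; rewrite cat0s [finv [::]]/= !cats0.
Qed.

Lemma conj_cyclic_decomposition w :
  reduced w -> w != [::] ->
  exists u y, [/\ w = u ++ y ++ finv u, y != [::] & reduced (y ++ y)].
Proof.
have [n] := ubnP (size w); elim: n w => // n IHn w lt_wn rw w_neq0.
case: w lt_wn rw w_neq0 => [//|x w] lt_wn rw _.
case/lastP: w lt_wn rw => [|v x'] lt_wn rw.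
  by exists [::], [:: x]; split; rewrite //= andbT eq_sym inv_letter_neq.
have [def_x'|ne_x'] := eqVneq x' (inv x).
  have r_v : reduced v by move: rw; rewrite -cats1 -cat1s => /reduced_catr /reduced_catl.
  have v_neq0 : v != [::] by apply: contraTneq rw => ->; rewrite def_x' /= eqxx.
  have lt_vn : size v < n by move: lt_wn; rewrite /= size_rcons; lia.
  have [u [y [def_v y_neq0 r_yy]]] := IHn v lt_vn r_v v_neq0.
  by exists (x :: u), y; rewrite def_v def_x' finv_cons !rcons_cat.
exists [::], (x :: rcons v x'); split; rewrite ?cats0 //.
apply: (reduced_rcons_cons (s := x :: v)) => //.
by apply: contra_neq ne_x' => ->; rewrite inv_letterK.
Qed.

Lemma proper_power_of_period x0 w d :
  reduced w -> 0 < d < size w -> d %| size w ->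
  (forall i, nth x0 w ((i + d) %% size w) = nth x0 w (i %% size w)) ->
  proper_power w.
Proof.
move=> rw /andP [d_gt0 lt_dw] dvd_dw period.
set p := size w in lt_dw dvd_dw period; set u := take d w.
have size_u : size u = d by rewrite size_takel // ltnW.
have shift c i : nth x0 w ((i + c * d) %% p) = nth x0 w (i %% p).
  by elim: c => [|c IHc]; rewrite ?addn0 // mulSnr addnA period.
have nth_w i : i < p -> nth x0 w i = nth x0 u (i %% d).
  move=> lt_tp; rewrite nth_take ?ltn_pmod // -[in LHS](modn_small lt_tp).
  rewrite [i in LHS](divn_eq i d) addnC shift modn_small //.
  exact: ltn_trans (ltn_pmod _ _) lt_dw.
have w_catn : w = catn (p %/ d) u.
  apply: (@eq_from_nth _ x0); first by rewrite size_catn size_u divnK.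
  by move=> i lt_tp; rewrite nth_catn size_u ?divnK // nth_w.
have N_gt1 : 1 < p %/ d by rewrite ltn_divRL // mul1n.
have r_uu : reduced (u ++ u).
  by move: rw; rewrite w_catn -(subnKC N_gt1) catnD /catn /= cats0 => /reduced_catl.
exists u, (p %/ d); split; first exact: reduced_catl r_uu.
split=> //; rewrite fpow_cyclic_pos //.
by rewrite -size_eq0 size_u -lt0n.
Qed.

Lemma isA_nth_window x0 z b i :
  all isB b -> i < size (z ++ b) -> isA (nth x0 (z ++ b) i) -> i < size z.
Proof.
move=> allB lt_i; rewrite nth_cat; case: ltnP => // le_zi.
rewrite -[isA _]negbK -isB_isA (allP allB) // mem_nth //.
by move: lt_i; rewrite size_cat; lia.
Qed.

Lemma catn_factor_aligned z b g h n :
  reduced (z ++ b) -> begins_in_A z -> all isB b -> ~ proper_power (z ++ b) ->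
  catn n (z ++ b) = g ++ z ++ h -> size (z ++ b) %| size g.
Proof.
case: z => [//|x0 z']; set z := x0 :: z' => rw zA allB npp E.
set w := z ++ b in rw npp E *; set p := size w; set L := size z; set k := size g.
have lt_Lp : L <= p by rewrite /p size_cat leq_addr.
have p_gt0 : 0 < p by apply: leq_trans lt_Lp.
have le_kLn : k + L <= n * p.
  by move/(congr1 size): E; rewrite size_catn size_cat [size (z ++ h)]size_cat; lia.
rewrite /dvdn; case: (posnP (k %% p)) => [/eqP //|K_gt0]; exfalso; apply: npp.
pose f i := nth x0 w (i %% p).
have f_mod i : f (i %% p) = f i by rewrite /f modn_mod.
have marked0 : isA (f 0) by rewrite /f mod0n.
have marked_window i : isA (f i) -> i %% p < L.
  exact: isA_nth_window allB (ltn_pmod i p_gt0).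
have shift_window j : j < L -> f (j + k %% p) = f j.
  move=> lt_jL; rewrite /f modnDmr (modn_small (leq_trans lt_jL lt_Lp)).
  rewrite -(@nth_catn _ x0 n w); last by lia.
  by rewrite E addnC nth_mid_cat // /w nth_cat lt_jL.
have period := gcd_period f_mod K_gt0 (ltn_pmod k p_gt0) marked0 marked_window shift_window.
apply: (proper_power_of_period (x0 := x0) (d := gcdn p (k %% p))) rw _ _ period.
  rewrite gcdn_gt0 p_gt0 /=; apply: leq_ltn_trans (ltn_pmod k p_gt0).
  exact: dvdn_leq K_gt0 (dvdn_gcdr _ _).
exact: dvdn_gcdl.
Qed.

Lemma catn_finv_factor_false z b g h n :
  reduced (z ++ b) -> begins_in_A z -> all isB b ->
  catn n (finv (z ++ b)) <> g ++ z ++ h.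
Proof.
case: z => [//|x0 z']; set z := x0 :: z' => rw zA allB E.
set w := z ++ b in rw E; set p := size w; set L := size z; set k := size g.
have lt_Lp : L <= p by rewrite /p size_cat leq_addr.
have L_gt0 : 0 < L by [].
have le_kLn : k + L <= n * p.
  move/(congr1 size): E.
  by rewrite size_catn size_finv size_cat [size (z ++ h)]size_cat; lia.
have mirror j : j < L -> nth x0 w j = inv (nth x0 w (p.-1 - (k + j) %% p)).
  move=> lt_jL; have lt_kjp : (k + j) %% p < p by apply: ltn_pmod; lia.
  rewrite /w nth_cat lt_jL -(@nth_mid_cat _ x0 g z h j) // -E.
  rewrite nth_catn size_finv; last by lia.
  by rewrite nth_finv // -/w -/p; congr (inv (nth _ _ _)); lia.
set D := p.-1 - k %% p.
have lt_DL : D < L.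
  have : isA (nth x0 w 0) by [].
  rewrite mirror // isA_inv addn0 -/D => isA_D.
  by apply: isA_nth_window allB _ isA_D; rewrite -/w -/p /D; lia.
have size_t : size (take D.+1 w) = D.+1 by rewrite size_takel //; lia.
have selfinv : finv (take D.+1 w) = take D.+1 w.
  apply: (@eq_from_nth _ x0); rewrite size_finv // size_t => j lt_jD.
  rewrite nth_finv size_t // !nth_take //; last by lia.
  rewrite [RHS]mirror; last by lia.
  rewrite -modnDml (modn_small (_ : _ < p)); last by rewrite /D in lt_jD; lia.
  by congr (inv (nth _ _ _)); rewrite /D; lia.
have r_t : reduced (take D.+1 w).
  by apply: (@reduced_catl _ (drop D.+1 w)); rewrite cat_take_drop.
by move: (finv_neq r_t); rewrite -size_eq0 size_t selfinv eqxx => /(_ isT).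
Qed.

Lemma conj_catn_factor_offset0 u y Y g h N :
  u != [::] -> y != [::] -> reduced (u ++ y ++ finv u) -> size Y = size y ->
  u ++ catn N Y ++ finv u = g ++ (u ++ y ++ finv u) ++ h -> g = [::].
Proof.
move=> u_neq0 y_neq0 rz sY E.
have x0 : letter by case: u u_neq0 {rz E}.
set z := u ++ y ++ finv u in rz E; set W := u ++ catn N Y ++ finv u in E.
set m := size u; set q := size y; set k := size g.
have m_gt0 : 0 < m by rewrite lt0n size_eq0.
have q_gt0 : 0 < q by rewrite lt0n size_eq0.
have size_z : size z = m + q + m by rewrite /z !size_cat size_finv addnA.
have size_W : size W = m + N * q + m by rewrite /W !size_cat size_catn sY size_finv addnA.
have le_kq : k + q <= N * q.
  by move/(congr1 size): E; rewrite size_W size_cat [size (z ++ h)]size_cat size_z; lia.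
have nth_W i : i < N * q -> nth x0 W (m + i) = nth x0 Y (i %% q).
  by move=> lt_i; rewrite /W nth_mid_cat ?size_catn ?sY // nth_catn sY.
have nth_Wz j : j < size z -> nth x0 W (k + j) = nth x0 z j.
  by move=> lt_j; rewrite E nth_mid_cat.
have z_after_y : nth x0 z (m + q) = inv (nth x0 z m.-1).
  rewrite /z nth_cat ltnNge leq_addr addKn nth_cat ltnn subnn nth_finv //.
  by rewrite nth_cat ltn_predL m_gt0 subn1.
apply: size0nil; case: (posnP k) => // k_gt0; exfalso.
(* The last letters of u and of y in z sit q apart inside the q-periodic middle
   of W, so they are equal; but in z the letter after y is inv (last u). *)
have same : nth x0 z (m + q).-1 = nth x0 z m.-1.
  rewrite -nth_Wz ?size_z; last by lia.
  rewrite -nth_Wz ?size_z; last by lia.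
  rewrite (_ : k + (m + q).-1 = m + (k.-1 + q)); last by lia.
  rewrite (_ : k + m.-1 = m + k.-1); last by lia.
  by rewrite !nth_W ?modnDr //; lia.
have lt_mq : (m + q).-1.+1 < size z by rewrite size_z; lia.
by move: (nth_reduced x0 rz lt_mq); rewrite prednK ?addn_gt0 ?m_gt0 // z_after_y same eqxx.
Qed.

Lemma conj_catn_prefix u y Y h N :
  u != [::] -> y != [::] -> reduced (u ++ y ++ finv u) -> size Y = size y ->
  u ++ catn N Y ++ finv u = (u ++ y ++ finv u) ++ h -> Y = y /\ N = 1.
Proof.
move=> u_neq0 y_neq0 rz sY; rewrite -!catA => /eqP; rewrite eqseq_cat // eqxx /= => /eqP E.
case: N E => [|N] E.
  move/(congr1 size): E; rewrite !size_cat size_catn mul0n add0n => E; exfalso.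
  by move: y_neq0; rewrite -size_eq0 -lt0n; lia.
move/eqP: E; rewrite catnS -catA eqseq_cat // => /andP [/eqP YE /eqP E]; split=> //.
case: N E => [//|N]; rewrite YE catnS; case/lastP: u u_neq0 rz => [//|u' x] _ rz.
case: y y_neq0 rz {YE sY} => [//|y0 y'] _ rz; rewrite finv_rcons /= => -[y0E _].
by move: rz; rewrite reducedE cat_rcons sorted_cat_cons /= y0E eqxx andbF.
Qed.

Lemma noncyclic_power_factor z g h (i : int) :
  reduced z -> z != [::] -> ~~ reduced (z ++ z) ->
  fpow z i = g ++ z ++ h -> i = Posz 1 /\ g = [::].
Proof.
move=> rz z_neq0 nr_zz.
have [u [y [def_z y_neq0 r_yy]]] := conj_cyclic_decomposition rz z_neq0.
have u_neq0 : u != [::] by apply: contraNneq nr_zz => u0; rewrite def_z u0 /= cats0.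
rewrite def_z in rz *; case: i => [[|n]|n] E.
- by case: u u_neq0 rz def_z E => [//|x u'] _ _ _; case: g.
- rewrite fpow_conj_pos // in E.
  have g0 := conj_catn_factor_offset0 u_neq0 y_neq0 rz (erefl _) E.
  rewrite g0 cat0s in E.
  have [_ n0] := conj_catn_prefix u_neq0 y_neq0 rz (erefl _) E.
  by rewrite n0.
- rewrite fpow_conj_neg // in E.
  have g0 := conj_catn_factor_offset0 u_neq0 y_neq0 rz (size_finv y) E.
  rewrite g0 cat0s in E.
  have [y_selfinv _] := conj_catn_prefix u_neq0 y_neq0 rz (size_finv y) E.
  by move: (finv_neq (reduced_catl r_yy) y_neq0); rewrite y_selfinv eqxx.
Qed.

Lemma cyclic_power_factor z b g h (i : int) :
  reduced ((z ++ b) ++ (z ++ b)) -> begins_in_A z -> all isB b ->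
  ~ proper_power (z ++ b) -> fpow (z ++ b) i = g ++ z ++ h ->
  (1 <= i)%R /\ in_cyclic (z ++ b) g.
Proof.
move=> r_ww zA allB npp; have w_neq0 : z ++ b != [::] by case: (z) zA.
have rw := reduced_catl r_ww.
case: i => n; last by rewrite fpow_cyclic_neg // => /(catn_finv_factor_false rw zA allB).
rewrite fpow_cyclic_pos // => E.
have size_E : size g + size (z ++ h) = n * size (z ++ b) by rewrite -size_cat -E size_catn.
have dvd_wg := catn_factor_aligned rw zA allB npp E.
split.
  case: n size_E {E} => //; rewrite size_cat mul0n.
  by case: (z) zA => [//|x z'] _; rewrite /= addSn addnS.
exists (Posz (size g %/ size (z ++ b))); rewrite fpow_cyclic_pos //.
rewrite -{1}[g](take_size_cat (z ++ h) (erefl _)) -E -{1}(divnK dvd_wg) take_catn //.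
by rewrite leq_divLR // -size_E leq_addr.
Qed.

Lemma reduced_cat_A_B z b :
  reduced z -> ends_in_A z -> reduced b -> all isB b -> reduced (z ++ b).
Proof.
case/lastP: z => [//|s x] rz; rewrite /ends_in_A rev_rcons => xA rb.
case: b rb => [|y t] rb; first by rewrite cats0.
case/andP; rewrite isB_isA => yA _; apply: reduced_rcons_cons => //.
by apply: neq_inv_letter; rewrite xA.
Qed.

Lemma reduced_cyclic_of_B_suffix z b :
  reduced (z ++ b) -> begins_in_A z -> all isB b -> b != [::] ->
  reduced ((z ++ b) ++ (z ++ b)).
Proof.
case: z => [//|y z'] rw yA; case/lastP: b rw => [//|b' x] rw.
rewrite all_rcons isB_isA => /andP [xA _] _; rewrite {2}cat_cons -rcons_cat.
apply: reduced_rcons_cons => //; first by rewrite rcons_cat.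
by apply: neq_inv_letter; move: yA; rewrite /begins_in_A => ->; rewrite (negbTE xA).
Qed.
End ReducedWords.

Local Open Scope ring_scope.

Theorem lemma2p2 (A B : eqType) (b z : word A B) :
  reduced b -> in_gen_B b ->
  reduced z -> begins_in_A z -> ends_in_A z ->
  ~ proper_power (fmul z b) ->
  forall (i : int) (g h : word A B),
    reduced g -> reduced h ->
    reduced (g ++ z ++ h) ->
    fpow (fmul z b) i = g ++ z ++ h ->
    1 <= i /\ in_cyclic (fmul z b) g.
Proof.
(* g z h is a power of a reduced word. *)
move=> rb /in_gen_B_all_isB allB rz zA zA' npp i g h _ _ _.
have rw : reduced (z ++ b) := reduced_cat_A_B rz zA' rb allB.
rewrite /fmul reduce_id // in npp *.
have [r_ww|nr_ww] := boolP (reduced ((z ++ b) ++ (z ++ b))).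
  exact: cyclic_power_factor.
have b0 : b = [::].
  by apply/eqP; apply: contraNT nr_ww; apply: reduced_cyclic_of_B_suffix.
rewrite b0 cats0 in rw nr_ww *; move=> E.
have z_neq0 : z != [::] by case: (z) zA.
have [-> ->] := noncyclic_power_factor rw z_neq0 nr_ww E.
by split=> //; exists 0.
Qed.
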